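(* Let $1\le p<\infty$, let $f\in\mathcal U_p(\mathbb{R}^2)$, and set $\varphi_1(y)=\|f_y\|^*_{\operatorname{Lip}\frac1p}$ and $\varphi_2(x)=\|f_x\|^*_{\operatorname{Lip}\frac1p}$. Then $f\in S_0(\mathbb{R}^2)$, and there is a constant $c>0$ depending only on $p$ such that for every $t>0$, $$f^*(t)-f^*(2t)\le c\,t^{1/(2p)}\left(\varphi_1^*\!\left(\tfrac{\sqrt t}{2}\right)+\varphi_2^*\!\left(\tfrac{\sqrt t}{2}\right)\right).$$
   Context: For a function $f$ on $\mathbb{R}^2$, $f_x(y)=f(x,y)$ and $f_y(x)=f(x,y)$ denote the sections. For $\varphi$ on $\mathbb{R}$, $\Delta_h\varphi(t)=\varphi(t+h)-\varphi(t)$; for $\alpha\in(0,1]$, $\|\varphi\|^*_{\operatorname{Lip}\alpha}=\sup_{h>0}h^{-\alpha}\|\Delta_h\varphi\|_\infty$ ($\|\cdot\|_\infty$ the essential supremum), $\operatorname{Lip}\alpha$ is the class of $\varphi\in L^\infty(\mathbb{R})$ with this quantity finite, and $\|\varphi\|_{\operatorname{Lip}\alpha}=\|\varphi\|_\infty+\|\varphi\|^*_{\operatorname{Lip}\alpha}$. $S_0(\mathbb{R}^n)$ is the class of measurable a.e. finite $g$ on $\mathbb{R}^n$ with $|\{|g|>s\}|<\infty$ for all $s>0$; $g^*$ is the non-increasing rearrangement of $g$ on $(0,\infty)$ (non-negative, non-increasing, equimeasurable with $|g|$). $L^{p,1}(\mathbb{R})$ is the set of $g\in S_0(\mathbb{R})$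 with $\int_0^\infty t^{1/p-1}g^*(t)\,dt<\infty$. $\mathcal U_p(\mathbb{R}^2)$ is the set of measurable $f$ on $\mathbb{R}^2$ such that almost every $x$-section and $y$-section lies in $\operatorname{Lip}\frac1p$ and $y\mapsto\|f_y\|_{\operatorname{Lip}\frac1p}$, $x\mapsto\|f_x\|_{\operatorname{Lip}\frac1p}$ belong to $L^{p,1}(\mathbb{R})$. *)

From HB Require Import structures.
From mathcomp Require Import all_boot all_order all_algebra.
From mathcomp Require Import all_classical all_reals all_analysis measurable_realfun ess_sup_inf.
Set Implicit Arguments. Unset Strict Implicit. Unset Printing Implicit Defensive.
Import Order.TTheory GRing.Theory Num.Theory.
Local Open Scope classical_set_scope.
Local Open Scope ring_scope.

Section defs.
Context {R : realType}.
Local Notation leb := (@lebesgue_measure R).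

Definition leb2 := (leb \x leb)%E.

Definition S0 d (T : measurableType d) (mu : set T -> \bar R)
  (g : T -> \bar R) : Prop :=
  [/\ measurable_fun setT g,
      mu.-negligible [set x | ~ (g x \is a fin_num)] &
      forall s : R, 0 < s -> (mu [set x | s%:E < `|g x|] < +oo)%E].

Definition rearr d (T : measurableType d) (mu : set T -> \bar R)
  (g : T -> \bar R) (t : R) : \bar R :=
  ereal_inf [set s%:E | s in
     [set s : R | 0 <= s /\ (mu [set x | s%:E < `|g x|] <= t%:E)%E]].

Definition Lp1 (p : R) (g : R -> \bar R) : Prop :=
  S0 leb g /\
  (\int[leb]_(t in [set t : R | (0 < t)%R]) (EFin (powR t (p^-1 - 1)%R) * rearr leb g t) < +oo)%E.

Definition supnorm (phi : R -> R) : \bar R :=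
  ess_sup leb (fun t => (`|phi t|)%:E).

Definition Delta (h : R) (phi : R -> R) : R -> R := fun t => phi (t + h) - phi t.

Definition lipsemi (alpha : R) (phi : R -> R) : \bar R :=
  ereal_sup [set (EFin (powR h (- alpha)%R) * supnorm (Delta h phi))%E
            | h in [set h : R | (0 < h)%R]].

Definition lipnorm (alpha : R) (phi : R -> R) : \bar R :=
  (supnorm phi + lipsemi alpha phi)%E.

Definition Lip (alpha : R) (phi : R -> R) : Prop :=
  measurable_fun setT phi /\
  (supnorm phi < +oo)%E /\ (lipsemi alpha phi < +oo)%E.

(* the class U_p(R^2); sections f_x(y) = f(x,y) and f_y(x) = f(x,y) *)
Definition Up (p : R) (f : R * R -> R) : Prop :=
  [/\ measurable_fun setT f,
      {ae leb, forall x, Lip p^-1 (fun y => f (x, y))},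
      {ae leb, forall y, Lip p^-1 (fun x => f (x, y))},
      Lp1 p (fun y => lipnorm p^-1 (fun x => f (x, y))) &
      Lp1 p (fun x => lipnorm p^-1 (fun y => f (x, y)))].

End defs.

From HB Require Import structures.
From mathcomp Require Import all_boot all_order all_algebra.
From mathcomp Require Import all_classical all_reals all_analysis measurable_realfun ess_sup_inf.
From mathcomp Require Import ring lra.
Set Implicit Arguments. Unset Strict Implicit. Unset Printing Implicit Defensive.
Import Order.TTheory GRing.Theory Num.Theory.
Local Open Scope classical_set_scope.
Local Open Scope ring_scope.

(* Fix levels a, b, lam with |{phi1 > a}|, |{phi2 > b}| <= sqrt t / 2 and
   |{|f| > lam}| <= 2t, and put h = 4 sqrt t, H = h^(1/p).  Outside {phi1 > a} the
   horizontal sections of f have increments over distances <= h bounded by aH (and the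
   vertical ones by bH outside {phi2 > b}).  So if the horizontal section at such a height
   of E = {|f| > lam + (a + b) H} is not null, almost every translate by (0, h] of some
   point of it lies in {|f| > lam}, whose section at that height thus has measure >= h.
   By Fubini the heights where E has a non-null section form a set of measure
   <= 2t / h + sqrt t / 2 = sqrt t, and likewise for the abscissae; as E lies, up to a
   null set, in the product of these two sets, |E| <= t.  Hence
   f^*(t) <= lam + (a + b) H <= lam + 4 t^(1/(2p)) (a + b), and letting a, b, lam decrease
   to phi1^*(sqrt t / 2), phi2^*(sqrt t / 2), f^*(2t) gives the estimate with c = 4. *)

Section superlevel_sets.
Context d (T : measurableType d) (R : realType).

Lemma measurable_superlevel (g : T -> R) (c : R) :
  measurable_fun setT g -> measurable [set x | c < g x].
Proof.
move=> mg; rewrite -[X in measurable X]setTI.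
have -> : [set x | c < g x] = g @^-1` `]c, +oo[.
  by apply/seteqP; split => x /=; rewrite in_itv /= andbT.
exact: mg (measurable_itv _).
Qed.

Lemma measurable_esuperlevel (g : T -> \bar R) (c : \bar R) :
  measurable_fun setT g -> measurable [set x | (c < g x)%E].
Proof.
move=> mg; rewrite -[X in measurable X]setTI.
have -> : [set x | (c < g x)%E] = g @^-1` `]c, +oo[.
  by apply/seteqP; split => x /=; rewrite in_itv /= andbT.
exact: mg (emeasurable_itv _).
Qed.

Lemma measurable_superlevel_norm (g : T -> R) (c : R) :
  measurable_fun setT g -> measurable [set x | c < `|g x|].
Proof.
move=> mg; apply: (@measurable_superlevel (Num.norm \o g)).
exact: measurableT_comp (@normr_measurable R setT) mg.
Qed.

Lemma measurable_esuperlevel_abse (g : T -> \bar R) (c : R) :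
  measurable_fun setT g -> measurable [set x | (c%:E < `|g x|)%E].
Proof.
move=> mg; apply: (@measurable_esuperlevel (abse \o g)).
exact: measurableT_comp (@abse_measurable R setT) mg.
Qed.

Lemma esuperlevel_EFin (g : T -> R) (c : R) :
  [set x | (c%:E < `|(EFin \o g) x|)%E] = [set x | c < `|g x|].
Proof. by apply/seteqP; split => x /=; rewrite lte_fin. Qed.

End superlevel_sets.

Section product_measure_sections.
Local Open Scope ereal_scope.
Context d1 d2 (T1 : measurableType d1) (T2 : measurableType d2) (R : realType).
Variables (m1 : {sigma_finite_measure set T1 -> \bar R})
          (m2 : {sigma_finite_measure set T2 -> \bar R}).

Lemma product_measure12 (A : set (T1 * T2)) :
  measurable A -> (m1 \x m2) A = (m1 \x^ m2) A.
Proof.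
move=> mA; apply: product_measure_unique => // B C mB mC.
exact: product_measure2E.
Qed.

Lemma product_measure_xsection0 (A : set (T1 * T2)) :
  (forall x, m2 (xsection A x) = 0) -> (m1 \x m2) A = 0.
Proof. by move=> A0; apply: integral0_eq => x _ /=. Qed.

Lemma product_measure_ysection0 (A : set (T1 * T2)) : measurable A ->
  (forall y, m1 (ysection A y) = 0) -> (m1 \x m2) A = 0.
Proof.
by move=> mA A0; rewrite product_measure12 //; apply: integral0_eq => y _ /=.
Qed.

Lemma product_measure_ge_xsection (A : set (T1 * T2)) (X : set T1) (c : R) :
  measurable A -> measurable X -> (0 <= c)%R ->
  (forall x, X x -> c%:E <= m2 (xsection A x)) -> c%:E * m1 X <= (m1 \x m2) A.
Proof.
move=> mA mX c0 cA; rewrite -integral_cst //.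
have mA2 := measurable_fun_xsection m2 mA.
apply: (@le_trans _ _ (\int[m1]_(x in X) m2 (xsection A x))).
  by apply: ge0_le_integral => //; exact: measurable_funS mA2.
exact: ge0_subset_integral.
Qed.

Lemma product_measure_ge_ysection (A : set (T1 * T2)) (Y : set T2) (c : R) :
  measurable A -> measurable Y -> (0 <= c)%R ->
  (forall y, Y y -> c%:E <= m1 (ysection A y)) -> c%:E * m2 Y <= (m1 \x m2) A.
Proof.
move=> mA mY c0 cA; rewrite product_measure12 // -integral_cst //.
have mA1 := measurable_fun_ysection m1 mA.
apply: (@le_trans _ _ (\int[m2]_(y in Y) m1 (ysection A y))).
  by apply: ge0_le_integral => //; exact: measurable_funS mA1.
exact: ge0_subset_integral.
Qed.

Lemma product_measure_le_mul (Z : set (T1 * T2)) (X : set T1) (Y : set T2) :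
  measurable Z -> measurable X -> measurable Y ->
  (forall x, ~ X x -> m2 (xsection Z x) = 0) ->
  (forall y, ~ Y y -> m1 (ysection Z y) = 0) ->
  (m1 \x m2) Z <= m1 X * m2 Y.
Proof.
move=> mZ mX mY Zx0 Zy0.
pose N1 := Z `&` (~` X `*` setT); pose N2 := Z `&` (setT `*` ~` Y).
have mN1 : measurable N1.
  by apply: measurableI => //; apply: measurableX => //; exact: measurableC.
have mN2 : measurable N2.
  by apply: measurableI => //; apply: measurableX => //; exact: measurableC.
have N10 : (m1 \x m2) N1 = 0.
  apply: product_measure_xsection0 => x; have [Xx|nXx] := pselect (X x).
    rewrite (_ : xsection N1 x = set0) ?measure0 //.
    by apply/seteqP; split => y //; rewrite /xsection /= inE => -[_ []].
  apply: subset_measure0 (Zx0 x nXx); try exact: measurable_xsection.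
  by move=> y; rewrite /xsection /= !inE => -[].
have N20 : (m1 \x m2) N2 = 0.
  apply: product_measure_ysection0 => // y; have [Yy|nYy] := pselect (Y y).
    rewrite (_ : ysection N2 y = set0) ?measure0 //.
    by apply/seteqP; split => x //; rewrite /ysection /= inE => -[_ []].
  apply: subset_measure0 (Zy0 y nYy); try exact: measurable_ysection.
  by move=> x; rewrite /ysection /= !inE => -[].
have mXY : measurable (X `*` Y) by exact: measurableX.
have mN12 : measurable (N1 `|` N2) by exact: measurableU.
rewrite -product_measure1E // -(measureU0 mXY mN12); last exact: null_set_setU.
apply: le_measure; rewrite ?inE //; first exact/measurableU/measurableU.
move=> [x y] Zxy; have [Xx|nXx] := pselect (X x); last by right; left.
by have [Yy|nYy] := pselect (Y y); [left|right; right].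
Qed.

Lemma product_measure0_xsection_ae (N : set (T1 * T2)) :
  measurable N -> (m1 \x m2) N = 0 -> {ae m1, forall x, m2 (xsection N x) = 0}.
Proof.
move=> mN N0.
have mN2 := measurable_fun_xsection m2 mN.
have : \int[m1]_(x in setT) `|m2 (xsection N x)| = 0.
  by rewrite -N0; apply: eq_integral => x _; rewrite gee0_abs.
by move/(ae_eq_integral_abs m1 measurableT mN2); apply: filterS => x /(_ I).
Qed.

End product_measure_sections.

Lemma measure_gt0_exists_notin d (T : measurableType d) (R : realType)
    (mu : {measure set T -> \bar R}) (S M : set T) :
  measurable S -> measurable M -> (0 < mu S)%E -> mu M = 0 ->
  exists2 x, S x & ~ M x.
Proof.
move=> mS mM S0 M0; apply: contrapT => noS.
suff S00 : mu S = 0 by rewrite S00 ltxx in S0.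
apply/eqP; rewrite -measure_le0 -M0 le_measure ?inE // => x Sx.
by apply: contrapT => nMx; apply: noS; exists x.
Qed.

Section translates.
Local Open Scope ereal_scope.
Context {R : realType}.
Local Notation mu := (@lebesgue_measure R).

Lemma measurable_shift (x : R) (G : set R) :
  measurable G -> measurable [set h | G (x + h)%R].
Proof.
move=> mG; rewrite -[X in measurable X]setTI.
by apply: measurable_funD => //; exact: measurable_cst.
Qed.

Lemma lebesgue_measure_shift (x : R) (G : set R) :
  measurable G -> mu [set h | G (x + h)%R] = mu G.
Proof.
move=> mG; symmetry.
apply: (@lebesgue_measure_unique R (pushforward mu (+%R x : R -> measurableTypeR R))) => //.
  by apply: measurable_funD => //; exact: measurable_cst.
move=> ? X /ocitvP [->|[[a b] /= ab ->]]; first by rewrite !measure0.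
rewrite /pushforward.
have -> : +%R x @^-1` `]a, b]%classic = `](a - x)%R, (b - x)%R]%classic.
  by apply/seteqP; split => h /=; rewrite !in_itv /= ltrBlDl lerBrDl.
rewrite !lebesgue_measure_itv /= !lte_fin ltrD2r.
by rewrite -!EFinB opprB addrA subrK.
Qed.

Lemma lebesgue_measure_ge_translates (S G : set R) (h : R) :
  measurable S -> measurable G -> (0 < h)%R -> 0 < mu S ->
  (forall h', (0 < h' <= h)%R -> mu [set x | S x /\ ~ G (x + h')%R] = 0) ->
  h%:E <= mu G.
Proof.
move=> mS mG h0 S0 SG.
pose N := [set z : R * R | S z.1 /\ (0 < z.2 <= h)%R /\ ~ G (z.1 + z.2)%R].
have mN : measurable N.
  have -> : N = (S `*` `]0%R, h]) `&` ((fun z : R * R => z.1 + z.2)%R @^-1` ~` G).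
    apply/seteqP; split => -[a b] /=; rewrite in_itv /=.
      by move=> [Sa [bh nG]].
    by move=> [[Sa bh] nG].
  apply: measurableI; first by apply: measurableX => //; exact: measurable_itv.
  rewrite -[X in measurable X]setTI.
  apply: (measurable_funD measurable_fst measurable_snd) => //.
  exact: measurableC.
(* N is null because its vertical sections are; hence some x in S has a null horizontal
   section, i.e. x + h' lies in G for almost every h' in (0, h]. *)
have N0 : (mu \x mu) N = 0.
  apply: product_measure_ysection0 => // y.
  have [yh|yh] := boolP (0 < y <= h)%R.
    rewrite -(SG y yh); congr (mu _); apply/seteqP.
    by split => a; rewrite /ysection /= inE /N /= => -[Sa]; [case|split].
  rewrite -[RHS](measure0 mu); congr (mu _); apply/seteqP; split => a //.
  by rewrite /ysection /= inE /N /= => -[_ [yh' _]]; rewrite yh' in yh.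
have [M [mM M0 NM]] := product_measure0_xsection_ae (m1 := mu) (m2 := mu) mN N0.
have [x Sx nMx] := @measure_gt0_exists_notin _ _ _ mu S M mS mM S0 M0.
have Nx0 : mu (xsection N x) = 0 by apply: contrapT => Nx; exact/nMx/NM.
have -> : h%:E = mu `]0%R, h]%classic.
  by rewrite lebesgue_measure_itv /= lte_fin h0 sube0.
have mNx : measurable (xsection N x) by exact: measurable_xsection.
apply: (@le_trans _ _ (mu ([set y | G (x + y)%R] `|` xsection N x))).
  apply: le_measure; rewrite ?inE; [exact: measurable_itv| |].
    exact: measurableU (measurable_shift x mG) mNx.
  move=> y /= yh; have [Gy|nGy] := pselect (G (x + y)%R); [by left|right].
  by rewrite /xsection /= inE /N /=; move: yh; rewrite in_itv.
apply: le_trans (measureU2 mu (measurable_shift x mG) mNx) _.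
rewrite [X in _ + X](_ : _ = 0) // adde0.
by rewrite [X in X <= _](_ : _ = mu G) //; exact: lebesgue_measure_shift.
Qed.

End translates.

Section lipschitz_seminorm.
Local Open Scope ereal_scope.
Context {R : realType}.
Local Notation mu := (@lebesgue_measure R).

Lemma lebesgue_measureT_gt0 : 0 < mu setT.
Proof.
apply: (@lt_le_trans _ _ (mu `[0%R, 1%R]%classic)).
  by rewrite lebesgue_measure_itv /= lte_fin ltr01 sube0 lte01.
by apply: le_measure => //; rewrite inE.
Qed.

Lemma supnorm_ge0 (phi : R -> R) : 0 <= supnorm phi.
Proof.
apply: ess_sup_gee; first exact: lebesgue_measureT_gt0.
by apply: aeW => x; rewrite lee_fin.
Qed.

Lemma lipsemi_ge0 (al : R) (phi : R -> R) : 0 <= lipsemi al phi.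
Proof.
apply: le_trans (ereal_sup_ubound _); last by exists 1%R => //=; rewrite ltr01.
by rewrite powR1 mul1e supnorm_ge0.
Qed.

Lemma supnorm_le_lipnorm (al : R) (phi : R -> R) : supnorm phi <= `|lipnorm al phi|.
Proof. by apply: le_trans (lee_abs _); apply: leeDl; exact: lipsemi_ge0. Qed.

Lemma supnorm_le_negligible (phi : R -> R) (c : R) :
  supnorm phi <= c%:E -> mu.-negligible [set x | (c < `|phi x|)%R].
Proof.
move=> /ess_supP [N [mN N0 cN]]; exists N; split => // x /= cx; apply: cN => /=.
by rewrite lee_fin; apply/negP; rewrite -ltNge.
Qed.

Lemma supnorm_Delta_le (al a h h' : R) (phi : R -> R) :
  (0 < al)%R -> (0 < h' <= h)%R -> (0 <= a)%R ->
  lipsemi al phi <= a%:E -> supnorm (Delta h' phi) <= (a * powR h al)%:E.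
Proof.
move=> al0 /andP[h'0 h'h] a0 phia.
have h'al0 : (0 < powR h' (- al))%R by rewrite powR_gt0.
have : (powR h' (- al))%:E * supnorm (Delta h' phi) <= a%:E.
  by apply: le_trans phia; apply: ereal_sup_ubound; exists h'.
rewrite -lee_pdivlMl // => /le_trans; apply; rewrite lee_fin powRN invrK.
have h0 : (0 <= h)%R by rewrite ltW // (lt_le_trans h'0).
by rewrite mulrC ler_wpM2l // ge0_ler_powR ?nnegrE // ltW.
Qed.

Lemma superlevel_lebesgue_measure_ge (F : R -> R) (lam ka nu h : R) :
  measurable_fun setT F -> (0 < h)%R -> (lam + ka <= nu)%R ->
  (forall h', (0 < h' <= h)%R -> supnorm (Delta h' F) <= ka%:E) ->
  0 < mu [set x | (nu < `|F x|)%R] -> h%:E <= mu [set x | (lam < `|F x|)%R].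
Proof.
move=> mF h0 lnu Fka nuF.
have mlev c := measurable_superlevel_norm c mF.
apply: (lebesgue_measure_ge_translates (mlev nu) (mlev lam) h0 nuF) => h' hh'.
apply: measure_negligible; last first.
  apply: negligibleS (supnorm_le_negligible (Fka h' hh')) => x /= [nux lamx].
  move/negP: lamx; rewrite -leNgt => lamx.
  rewrite /Delta distrC; have := lerB_dist (F x) (F (x + h')%R); lra.
have mshift : measurable_fun setT (fun x : R => x + h')%R.
  by apply: measurable_funD => //; exact: measurable_cst.
rewrite (_ : [set x | _ /\ _] = [set x | (nu < `|F x|)%R] `&`
  ((fun x => x + h')%R @^-1` ~` [set x | (lam < `|F x|)%R])) //.
apply: measurableI; first exact: mlev.
rewrite -[X in measurable X]setTI; apply: mshift => //.
by apply: measurableC; exact: mlev.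
Qed.

End lipschitz_seminorm.

Lemma measure_le_div_add d (T : measurableType d) (R : realType)
    (mu : {measure set T -> \bar R}) (A B : set T) (g h : R) :
  measurable A -> measurable B -> 0 < h ->
  (h%:E * mu (A `\` B) <= g%:E)%E -> (mu A <= (g / h)%:E + mu B)%E.
Proof.
move=> mA mB h0 hAB.
have mAB : measurable (A `\` B) by exact: measurableD.
apply: (@le_trans _ _ (mu ((A `\` B) `|` B))).
  apply: le_measure; rewrite ?inE //; first exact: measurableU.
  by move=> z Az; have [Bz|nBz] := pselect (B z); [right|left].
apply: le_trans (measureU2 mu mAB mB) _; apply: leeD => //.
by rewrite mulrC EFinM lee_pdivlMl.
Qed.

Lemma xsection_superlevel (T1 T2 : Type) (R : realType) (f : T1 * T2 -> R) c x :
  xsection [set z | c < `|f z|] x = [set y | c < `|f (x, y)|].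
Proof. by apply/seteqP; split => y; rewrite /xsection /= inE. Qed.

Lemma ysection_superlevel (T1 T2 : Type) (R : realType) (f : T1 * T2 -> R) c y :
  ysection [set z | c < `|f z|] y = [set x | c < `|f (x, y)|].
Proof. by apply/seteqP; split => x; rewrite /ysection /= inE. Qed.

Section plane_superlevel_sets.
Local Open Scope ereal_scope.
Context {R : realType}.
Local Notation mu := (@lebesgue_measure R).

Lemma product_superlevel_le (f : R * R -> R) (lam ka kb h g : R) (X0 Y0 : set R) :
  measurable_fun setT f -> (0 <= ka)%R -> (0 <= kb)%R -> (0 < h)%R ->
  measurable X0 -> measurable Y0 ->
  (forall y, ~ Y0 y -> forall h', (0 < h' <= h)%R ->
     supnorm (Delta h' (fun x => f (x, y))) <= ka%:E) ->
  (forall x, ~ X0 x -> forall h', (0 < h' <= h)%R ->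
     supnorm (Delta h' (fun y => f (x, y))) <= kb%:E) ->
  (mu \x mu) [set z | (lam < `|f z|)%R] <= g%:E ->
  (mu \x mu) [set z | (lam + ka + kb < `|f z|)%R] <=
    ((g / h)%:E + mu X0) * ((g / h)%:E + mu Y0).
Proof.
move=> mf ka0 kb0 h0 mX0 mY0 rowY0 colX0 fg.
set E := [set z | (lam + ka + kb < `|f z|)%R].
have mE : measurable E by exact: measurable_superlevel_norm.
pose X1 := [set x | 0 < mu (xsection E x)].
pose Y1 := [set y | 0 < mu (ysection E y)].
have mX1 : measurable X1.
  exact: (measurable_esuperlevel 0 (measurable_fun_xsection mu mE)).
have mY1 : measurable Y1.
  exact: (measurable_esuperlevel 0 (measurable_fun_ysection mu mE)).
have X1le : mu X1 <= (g / h)%:E + mu X0.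
  apply: measure_le_div_add => //; apply: le_trans fg.
  apply: product_measure_ge_xsection => //; [exact: measurable_superlevel_norm|
    exact: measurableD|exact: ltW|].
  move=> x [X1x nX0x]; rewrite xsection_superlevel.
  apply: (@superlevel_lebesgue_measure_ge _ _ _ kb (lam + ka + kb)) => //.
  - exact: (measurableT_comp mf (pair1_measurable x)).
  - by rewrite addrAC lerDl.
  - exact: colX0.
  - by move: X1x; rewrite /X1 /= xsection_superlevel.
have Y1le : mu Y1 <= (g / h)%:E + mu Y0.
  apply: measure_le_div_add => //; apply: le_trans fg.
  apply: product_measure_ge_ysection => //; [exact: measurable_superlevel_norm|
    exact: measurableD|exact: ltW|].
  move=> y [Y1y nY0y]; rewrite ysection_superlevel.
  apply: (@superlevel_lebesgue_measure_ge _ _ _ ka (lam + ka + kb)) => //.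
  - exact: (measurableT_comp mf (pair2_measurable y)).
  - by rewrite lerDl.
  - exact: rowY0.
  - by move: Y1y; rewrite /Y1 /= ysection_superlevel.
apply: le_trans (product_measure_le_mul (m1 := mu) (m2 := mu) mE mX1 mY1 _ _) _.
- move=> x nX1x; apply/eqP; rewrite eq_le measure_ge0 andbT leNgt; exact/negP.
- move=> y nY1y; apply/eqP; rewrite eq_le measure_ge0 andbT leNgt; exact/negP.
- by apply: lee_pmul.
Qed.

End plane_superlevel_sets.

Section rearrangement.
Local Open Scope ereal_scope.
Context d (T : measurableType d) (R : realType) (mu : set T -> \bar R).
Implicit Types (g : T -> \bar R) (t : R).

Lemma rearr_ge0 g t : 0 <= rearr mu g t.
Proof. by apply/ereal_infP => _ [s [s0 _] <-]; rewrite lee_fin. Qed.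

Lemma rearr_le g t (s : R) :
  (0 <= s)%R -> mu [set x | s%:E < `|g x|] <= t%:E -> rearr mu g t <= s%:E.
Proof. by move=> s0 gs; apply: ereal_inf_lbound; exists s. Qed.

Lemma rearr_ltP g t (r : R) : rearr mu g t < r%:E ->
  exists s : R, [/\ (0 <= s)%R, mu [set x | s%:E < `|g x|] <= t%:E & (s < r)%R].
Proof. by move=> /ereal_inf_lt [_ [s [s0 gs] <-]]; rewrite lte_fin => sr; exists s. Qed.

End rearrangement.

Lemma outer_measurable_cover (R : realType) (D : set R) :
  exists U, [/\ measurable U, D `<=` U & lebesgue_measure U = lebesgue_measure D].
Proof.
have [G [oG DG GD]] := outer_measure_Gdelta D.
exists (\bigcap_i G i); split => //.
by apply: bigcap_measurable => // k _; exact: open_measurable.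
Qed.

Lemma Up_S0 (R : realType) (p : R) (f : R * R -> R) : Up p f -> S0 leb2 (EFin \o f).
Proof.
move=> [mf _ _ [[ml1 _ fin1] _] [[ml2 _ fin2] _]]; split.
- exact/measurable_EFinP.
- by exists set0; split => // z /=; apply.
move=> s s0; rewrite esuperlevel_EFin.
set Xs := [set x | (s%:E < `|lipnorm p^-1 (fun y => f (x, y))|)%E].
set Ys := [set y | (s%:E < `|lipnorm p^-1 (fun x => f (x, y))|)%E].
have mXs : measurable Xs by exact: measurable_esuperlevel_abse ml2.
have mYs : measurable Ys by exact: measurable_esuperlevel_abse ml1.
have mZ : measurable [set z | (s < `|f z|)%R] by exact: measurable_superlevel_norm.
have mcol x : measurable [set y | (s < `|f (x, y)|)%R].
  exact: measurable_superlevel_norm (measurableT_comp mf (pair1_measurable x)).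
have mrow y : measurable [set x | (s < `|f (x, y)|)%R].
  exact: measurable_superlevel_norm (measurableT_comp mf (pair2_measurable y)).
apply: le_lt_trans (product_measure_le_mul
  (m1 := lebesgue_measure) (m2 := lebesgue_measure) mZ mXs mYs _ _) _.
- move=> x nXx; rewrite xsection_superlevel; apply: measure_negligible; first exact: mcol.
  apply: supnorm_le_negligible; apply: le_trans (supnorm_le_lipnorm p^-1 _) _.
  by rewrite leNgt; apply/negP.
- move=> y nYy; rewrite ysection_superlevel; apply: measure_negligible; first exact: mrow.
  apply: supnorm_le_negligible; apply: le_trans (supnorm_le_lipnorm p^-1 _) _.
  by rewrite leNgt; apply/negP.
- apply: lte_mul_pinfty => //; last exact: fin1.
  by rewrite ge0_fin_numE // (fin2 _ s0).
Qed.

Lemma powR_mul4_sqrt_le (R : realType) (p t : R) : 1 <= p -> 0 < t ->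
  powR (4 * Num.sqrt t) p^-1 <= 4 * powR t (2 * p)^-1.
Proof.
move=> p1 t0; have p0 : 0 < p by exact: lt_le_trans p1.
rewrite powRM ?sqrtr_ge0 // -(powR12_sqrt (ltW t0)) -powRrM invfM [2^-1 * _]mulrC.
rewrite ler_wpM2r ?powR_ge0 // ler1_powR ?ler1n // ?invr_ge0 ?invf_le1 //.
Qed.

Lemma lee_sub_approx (R : realType) (X L A B : \bar R) (c : R) :
  0 < c -> (0 <= L)%E -> (0 <= A)%E -> (0 <= B)%E ->
  (forall l a b : R, (L < l%:E)%E -> (A < a%:E)%E -> (B < b%:E)%E ->
     (X <= (l + c * (a + b))%:E)%E) ->
  (X - L <= c%:E * (A + B))%E.
Proof.
move=> c0 L0 A0 B0 XLAB.
have cy (Y : \bar R) : (0 <= Y)%E -> (c%:E * (+oo + Y) = +oo)%E.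
  by case: Y => [y| |] // _; rewrite ?addye // mulry gtr0_sg // mul1e.
case: A A0 XLAB => [a0| |] // A0 XLAB; last by rewrite cy ?leey.
case: B B0 XLAB => [b0| |] // B0 XLAB; last by rewrite (addeC a0%:E) cy ?leey.
case: L L0 XLAB => [l0| |] // L0 XLAB; last by case: X {XLAB} => [x| |]; rewrite ?leNye.
rewrite lee_subel_addr //.
rewrite -[X in (_ <= X)%E]/((c * (a0 + b0) + l0)%:E); apply/lee_addgt0Pr => e e0.
pose eps := e / (1 + 2 * c).
have c2 : 0 < 1 + 2 * c by rewrite ltr_pwDl // ltW // mulr_gt0.
have eps0 : 0 < eps by rewrite divr_gt0.
have epsE : eps * (1 + 2 * c) = e by rewrite mulfVK // gt_eqF.
apply: le_trans (XLAB (l0 + eps) (a0 + eps) (b0 + eps) _ _ _) _;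
  rewrite ?lte_fin ?ltrDl // -EFinD lee_fin.
rewrite -epsE; nra.
Qed.

Section section_estimate.
Local Open Scope ereal_scope.
Context {R : realType}.
Local Notation mu := (@lebesgue_measure R).
Variables (p : R) (f : R * R -> R).
Hypotheses (p0 : (0 < p)%R) (mf : measurable_fun setT f).
Let phi1 y := lipsemi p^-1 (fun x => f (x, y)).
Let phi2 x := lipsemi p^-1 (fun y => f (x, y)).

Lemma rearr_section_estimate (t l a b : R) : (0 < t)%R ->
  rearr leb2 (EFin \o f) (2 * t) < l%:E ->
  rearr mu phi1 (Num.sqrt t / 2) < a%:E ->
  rearr mu phi2 (Num.sqrt t / 2) < b%:E ->
  rearr leb2 (EFin \o f) t <= (l + (a + b) * powR (4 * Num.sqrt t) p^-1)%:E.
Proof.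
move=> t0 /rearr_ltP[lam [lam0 flam laml]].
move=> /rearr_ltP[a' [a'0 phi1a' a'a]] /rearr_ltP[b' [b'0 phi2b' b'b]].
set s0 := (Num.sqrt t / 2)%R; set h := (4 * Num.sqrt t)%R; set H := powR h p^-1.
have sqrt0 : (0 < Num.sqrt t)%R by rewrite sqrtr_gt0.
have h0 : (0 < h)%R by rewrite mulr_gt0.
have H0 : (0 <= H)%R by exact: powR_ge0.
have p'0 : (0 < p^-1)%R by rewrite invr_gt0.
(* phi1 and phi2 need not be measurable: use measurable covers of their superlevel sets. *)
have [U1 [mU1 sU1 U1E]] := outer_measurable_cover [set y | a'%:E < `|phi1 y|].
have [U2 [mU2 sU2 U2E]] := outer_measurable_cover [set x | b'%:E < `|phi2 x|].
have row y : ~ U1 y -> forall h', (0 < h' <= h)%R ->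
    supnorm (Delta h' (fun x => f (x, y))) <= (a' * H)%:E.
  move=> nU1y h' hh'; apply: supnorm_Delta_le => //.
  by apply: le_trans (lee_abs _) _; rewrite leNgt; apply/negP => /sU1.
have col x : ~ U2 x -> forall h', (0 < h' <= h)%R ->
    supnorm (Delta h' (fun y => f (x, y))) <= (b' * H)%:E.
  move=> nU2x h' hh'; apply: supnorm_Delta_le => //.
  by apply: le_trans (lee_abs _) _; rewrite leNgt; apply/negP => /sU2.
rewrite esuperlevel_EFin in flam.
have := product_superlevel_le mf (mulr_ge0 a'0 H0) (mulr_ge0 b'0 H0) h0 mU2 mU1 row col flam.
have -> : (2 * t / h = s0)%R.
  by rewrite /h /s0 -{1}(sqr_sqrtr (ltW t0)); field; rewrite gt_eqF.
rewrite U1E U2E => fle.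
have s00 : 0 <= s0%:E by rewrite lee_fin divr_ge0 // ltW.
apply: (le_trans (rearr_le (addr_ge0 (addr_ge0 lam0 (mulr_ge0 a'0 H0)) (mulr_ge0 b'0 H0)) _)).
  rewrite esuperlevel_EFin; apply: le_trans fle _.
  have -> : t%:E = (s0%:E + s0%:E) * (s0%:E + s0%:E).
    by rewrite -EFinD -EFinM /s0 -{1}(sqr_sqrtr (ltW t0)); congr EFin; field.
  apply: lee_pmul.
  - exact: adde_ge0 s00 (measure_ge0 mu _).
  - exact: adde_ge0 s00 (measure_ge0 mu _).
  - exact: leeD (lexx _) phi2b'.
  - exact: leeD (lexx _) phi1a'.
have := ler_wpM2r H0 (ltW a'a); have := ler_wpM2r H0 (ltW b'b).
rewrite lee_fin; lra.
Qed.

End section_estimate.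

Theorem mainTheorem5 (R : realType) (p : R) (hp : 1 <= p) :
  exists c : R, 0 < c /\
    forall f : R * R -> R, Up p f ->
      S0 leb2 (EFin \o f) /\
      forall t : R, 0 < t ->
        (rearr leb2 (EFin \o f) t - rearr leb2 (EFin \o f) (2 * t)%R
         <= (EFin (c * powR t (2 * p)^-1)%R) *
            (rearr lebesgue_measure
                 (fun y => lipsemi p^-1 (fun x => f (x, y))) (Num.sqrt t / 2)%R
             + rearr lebesgue_measure
                 (fun x => lipsemi p^-1 (fun y => f (x, y))) (Num.sqrt t / 2)%R))%E.
Proof.
exists 4; split => // f fU; split; first exact: Up_S0 fU.
move=> t t0; have p0 : 0 < p by exact: lt_le_trans hp.
have [mf _ _ _ _] := fU.
apply: lee_sub_approx; rewrite ?mulr_gt0 ?powR_gt0 ?rearr_ge0 // => l a b fl phi1a phi2b.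
apply: le_trans (rearr_section_estimate p0 mf t0 fl phi1a phi2b) _.
have ab0 : 0 <= a + b.
  by rewrite addr_ge0 // -lee_fin; [apply: le_trans (ltW phi1a)|apply: le_trans (ltW phi2b)];
    exact: rearr_ge0.
by rewrite lee_fin lerD2l [leRHS]mulrC ler_wpM2l // powR_mul4_sqrt_le.
Qed.
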